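(* Let $R$ be a commutative ring with unit and let $S\subset\mathbb{N}$ be $R$-admissible. Then for each $m,n\in S$ with $m\mid n$ the homomorphism $\rho^R_{\langle n\rangle,\langle m\rangle}\colon R[q]^{\langle n\rangle}\to R[q]^{\langle m\rangle}$ is injective. Hence, regarding each $R[q]^{\langle n\rangle}$ ($n\in S$) as an $R$-subalgebra of $R[q]^{\langle1\rangle}=R[[q-1]]$ via these maps, $R[q]^S$ is identified with the intersection $\bigcap_{n\in S}R[q]^{\langle n\rangle}$. In particular, if $m,n\in\mathbb{N}$ and $m\mid n$, then $\rho^{\mathbb{Z}}_{\langle n\rangle,\langle m\rangle}\colon\mathbb{Z}[q]^{\langle n\rangle}\to\mathbb{Z}[q]^{\langle m\rangle}$ is injective, and $\mathbb{Z}[q]^{\mathbb{N}}=\bigcap_{n\in\mathbb{N}}\mathbb{Z}[q]^{\langle n\rangle}$ inside $\mathbb{Z}[[q-1]]$.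
   Context: $q$ is an indeterminate, $\Phi_n(q)$ the $n$th cyclotomic polynomial. For $S\subset\mathbb{N}$, $\Phi_S^*$ is the multiplicative subset of $\mathbb{Z}[q]$ generated by $\{\Phi_k(q):k\in S\}$, directed by divisibility, and $R[q]^S=\varprojlim_{f\in\Phi_S^*}R[q]/(f)$; for $S'\subset S$, $\rho^R_{S,S'}$ is induced by the identity of $R[q]$. For $n\in\mathbb{N}$, $\langle n\rangle=\{k\in\mathbb{N}:k\mid n\}$, so $R[q]^{\langle n\rangle}=\varprojlim_j R[q]/(q^n-1)^j$. $R$ is $p$-adically separated if $\bigcap_j p^jR=(0)$. For $k,k'\in\mathbb{N}$, $k\Leftrightarrow_R k'$ means $k=k'$, or $k/k'$ is an integer power (positive or negative exponent) of a prime $p$ with $R$ $p$-adically separated, or $R=\{0\}$. A subset $S\subset\mathbb{N}$ is $R$-admissible if it is nonempty, any two of its elements are joined by a finite chain in $S$ with consecutive elements related by $\Leftrightarrow_R$, $S$ is directed under divisibility, and $n\in S$ implies $\langle n\rangle\subset S$. *)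

From mathcomp Require Import all_boot all_order all_algebra all_field.
Set Implicit Arguments. Unset Strict Implicit. Unset Printing Implicit Defensive.
Import GRing.Theory.
Local Open Scope ring_scope.

Definition polyR (R : comNzRingType) (f : {poly int}) : {poly R} :=
  map_poly (fun z : int => z%:~R) f.

Definition congr_mod (R : comNzRingType) (f : {poly int}) (a b : {poly R}) : Prop :=
  exists h : {poly R}, a - b = h * polyR R f.

Definition PhiStar (S : nat -> Prop) (f : {poly int}) : Prop :=
  exists s : seq nat, (forall k, k \in s -> S k) /\ f = \prod_(k <- s) 'Phi_k.

(* Elements of R[q]^S = lim_{f in Phi_S^*} R[q]/(f) are represented by families
   x : f |-> x f (a representative in R[q] of the component in R[q]/(f)),
   compatible along divisibility f | g in Phi_S^*.  Two families represent the
   same element iff all their components agree in R[q]/(f). *)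
Definition compatible (R : comNzRingType) (S : nat -> Prop)
    (x : {poly int} -> {poly R}) : Prop :=
  forall f g, PhiStar S f -> PhiStar S g ->
    (exists h : {poly int}, g = h * f) -> congr_mod f (x g) (x f).

Definition lim_eq (R : comNzRingType) (S : nat -> Prop)
    (x y : {poly int} -> {poly R}) : Prop :=
  forall f, PhiStar S f -> congr_mod f (x f) (y f).

Definition divs (n : nat) : nat -> Prop := fun k => (0 < k)%N /\ (k %| n)%N.

Definition Nat_pos : nat -> Prop := fun k => (0 < k)%N.

Definition padic_separated (R : comNzRingType) (p : nat) : Prop :=
  forall x : R, (forall j : nat, exists y : R, x = (p ^ j)%:R * y) -> x = 0.

Definition equivR (R : comNzRingType) (k k' : nat) : Prop :=
  k = k'
  \/ (exists (p : nat) (j : nat), prime p /\ padic_separated R p /\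
        ((k = p ^ j * k')%N \/ (k' = p ^ j * k)%N))
  \/ (forall x : R, x = 0).

Inductive chain (S : nat -> Prop) (rel : nat -> nat -> Prop) : nat -> nat -> Prop :=
  | chain_refl a : S a -> chain S rel a a
  | chain_step a b c : chain S rel a b -> S c -> rel b c -> chain S rel a c.

Definition admissible (R : comNzRingType) (S : nat -> Prop) : Prop :=
  (forall k, S k -> (0 < k)%N) /\
  (exists k, S k) /\
  (forall a b, S a -> S b -> chain S (@equivR R) a b) /\
  (forall a b, S a -> S b -> exists c, [/\ S c, (a %| c)%N & (b %| c)%N]) /\
  (forall n, S n -> forall k, divs n k -> S k).

(* rho^R_{<n>,<m>} : R[q]^{<n>} -> R[q]^{<m>} (induced by the identity of R[q],
   i.e. restriction of families) is injective. *)
Definition rho_injective (R : comNzRingType) (m n : nat) : Prop :=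
  forall x y : {poly int} -> {poly R},
    compatible (divs n) x -> compatible (divs n) y ->
    lim_eq (divs m) x y -> lim_eq (divs n) x y.

(* Via rho_{S,<1>} (injective), R[q]^S is identified with the intersection over
   n in S of the images of rho_{<n>,<1>} in R[q]^{<1>} = R[[q-1]]. *)
Definition identified_with_intersection (R : comNzRingType) (S : nat -> Prop) : Prop :=
  (forall x y : {poly int} -> {poly R},
     compatible S x -> compatible S y ->
     lim_eq (divs 1) x y -> lim_eq S x y)
  /\
  (forall y : {poly int} -> {poly R}, compatible (divs 1) y ->
     (exists x, compatible S x /\ lim_eq (divs 1) x y) <->
     (forall n, S n -> exists z, compatible (divs n) z /\ lim_eq (divs 1) z y)).

(* Injectivity is a statement about the kernel: a compatible family z on <n>
   that vanishes in R[[q-1]] must vanish modulo every (q^d - 1)^L with d | n.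
   This goes up the divisors of n one prime p at a time, from d to dp:
   (q^d - 1)^p = q^dp - 1 + p g, hence (q^d - 1)^(pNj) lies in the ideal
   ((q^dp - 1)^N, p^j), so the remainder of z modulo the monic (q^dp - 1)^N is
   divisible by every p^j and vanishes because R is p-adically separated.
   Every element of Phi_<n>^* divides a power of q^n - 1, which gives the
   claim for all of R[q]^<n>.  Along a chain from 1 to n in S each step
   multiplies or divides by a power of a prime at which R is separated, so R
   is separated at every prime divisor of n.  Finally, families on the various <n>
   agreeing in R[[q-1]] agree on common divisors by injectivity, so (S being
   directed) they glue to a family on S. *)

From mathcomp Require Import all_boot all_order all_algebra all_field ring zify.
From Stdlib Require Import ClassicalEpsilon.
Import GRing.Theory.
Local Open Scope ring_scope.
Set Implicit Arguments. Unset Strict Implicit.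

Section PrimePowers.
Variable R : comNzRingType.
Implicit Types a b : R.

Lemma exprD_modl a b k : exists h, (a + b) ^+ k = a * h + b ^+ k.
Proof.
exists (\sum_(i < k) (a + b) ^+ (k.-1 - i) * b ^+ i).
by rewrite -[X in X * _](addrK b) -subrXX subrK.
Qed.

Lemma exprD_prime_mod a b p : prime p ->
  exists g, (a + b) ^+ p = a ^+ p + b ^+ p + p%:R * g.
Proof.
move=> p_pr; have p_gt0 := prime_gt0 p_pr.
pose c i := ('C(p, bump 0 i) %/ p)%N.
exists (\sum_(i < p.-1) a ^+ (p - bump 0 i) * b ^+ bump 0 i *+ c i).
rewrite -(prednK p_gt0) exprDn big_ord_recl big_ord_recr /=.
rewrite subn0 subnn !expr0 mulr1 mul1r bin0 binn !mulr1n /bump /= add1n prednK //.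
rewrite addrA addrAC mulr_sumr; congr (_ + _); apply: eq_bigr => i _.
rewrite mulr_natl -mulrnA divnK //.
by apply: prime_dvd_bin => //; have := ltn_ord i; rewrite /bump /=; lia.
Qed.

Lemma subr1X_prime_mod (T : R) p : prime p ->
  exists g, (T - 1) ^+ p = T ^+ p - 1 + p%:R * g.
Proof.
move=> p_pr; have [g ->] := exprD_prime_mod T (-1) p_pr.
case: (even_prime p_pr) => [-> | p_odd].
  by exists (g + 1); rewrite sqrrN expr1n; ring.
by exists g; rewrite -signr_odd p_odd expr1.
Qed.

Lemma subr1X_padic_mod (T : R) p N j : prime p ->
  exists u v, (T - 1) ^+ (p * N * j) = u * (T ^+ p - 1) ^+ N + (p ^ j)%:R * v.
Proof.
move=> p_pr; have [g Eg] := subr1X_prime_mod T p_pr.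
have [h Eh] := exprD_modl (p%:R * g) (T ^+ p - 1) N.
have [u Eu] := exprD_modl ((T ^+ p - 1) ^+ N) (p%:R * g * h) j.
exists u, ((g * h) ^+ j).
rewrite !exprM Eg addrC Eh addrC Eu natrX -exprMn !mulrA; ring.
Qed.
End PrimePowers.

Lemma padic_separated_monic_multiple (R : comNzRingType) p (D w : {poly R}) :
  padic_separated R p -> D \is monic ->
  (forall j, exists u v, w = u * D + (p ^ j)%:R * v) -> exists h, w = h * D.
Proof.
move=> sepR monD w_mod; exists (Pdiv.CommonRing.rdivp w D).
suff rem0 : Pdiv.CommonRing.rmodp w D = 0.
  by rewrite {1}(Pdiv.RingMonic.rdivp_eq monD w) rem0 addr0.
apply/polyP => i; rewrite coef0; apply: sepR => j.
have [u [v ->]] := w_mod j.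
rewrite (Pdiv.RingMonic.rmodpD monD) (Pdiv.RingMonic.rmodp_mull monD) add0r.
rewrite -polyC_natr mul_polyC (Pdiv.RingMonic.rmodpZ monD) coefZ.
by exists ((Pdiv.CommonRing.rmodp v D)`_i).
Qed.

Definition Xn_sub1_pow (d L : nat) : {poly int} := ('X^d - 1) ^+ L.

Lemma polyRM (R : comNzRingType) f g : polyR R (f * g) = polyR R f * polyR R g.
Proof. exact: rmorphM. Qed.

Lemma polyR_Xn_sub1_pow (R : comNzRingType) d L :
  polyR R (Xn_sub1_pow d L) = ('X^d - 1) ^+ L.
Proof. by rewrite /polyR rmorphXn rmorphB /= map_polyXn rmorph1. Qed.

Lemma Xn_sub1_pow_dvd d e a b : (a <= b)%N ->
  exists h, Xn_sub1_pow (d * e) b = h * Xn_sub1_pow d a.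
Proof.
move=> le_ab; have [s Es] : exists s, 'X^(d * e) - 1 = s * ('X^d - 1) :> {poly int}.
  exists (\sum_(i < e) ('X^d) ^+ (e.-1 - i) * 1 ^+ i).
  by rewrite mulrC exprM -subrXX expr1n.
exists (s ^+ b * ('X^d - 1) ^+ (b - a)).
by rewrite /Xn_sub1_pow Es exprMn -mulrA -[_ ^+ (b - a) * _]exprD subnK.
Qed.

Lemma Cyclotomic_dvd_Xn_sub1 n k : (0 < n)%N -> (k %| n)%N ->
  exists h, 'X^n - 1 = h * 'Phi_k.
Proof.
move=> n_gt0 kn; have kd : k \in divisors n by rewrite -dvdn_divisors.
exists (\prod_(i <- divisors n | i != k) 'Phi_i).
by rewrite -prod_Cyclotomic // (bigD1_seq k kd (divisors_uniq n)) mulrC.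
Qed.

Section CongrMod.
Variables (R : comNzRingType) (f : {poly int}).
Implicit Types a b c d : {poly R}.

Lemma congr_mod_sym a b : congr_mod f a b -> congr_mod f b a.
Proof. by case=> h E; exists (- h); rewrite mulNr -E opprB. Qed.

Lemma congr_mod_trans a b c : congr_mod f a b -> congr_mod f b c -> congr_mod f a c.
Proof. by case=> h1 E1 [h2 E2]; exists (h1 + h2); rewrite mulrDl -E1 -E2 addrA subrK. Qed.

Lemma congr_modB a b c d :
  congr_mod f a b -> congr_mod f c d -> congr_mod f (a - c) (b - d).
Proof. by case=> h1 E1 [h2 E2]; exists (h1 - h2); rewrite mulrBl -E1 -E2; ring. Qed.

Lemma congr_mod_sub0 a b : congr_mod f (a - b) 0 <-> congr_mod f a b.
Proof. by rewrite /congr_mod subr0. Qed.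

Lemma congr_mod_dvd g h a b : g = h * f -> congr_mod g a b -> congr_mod f a b.
Proof. by move=> -> [k E]; exists (k * polyR R h); rewrite E polyRM mulrA. Qed.

End CongrMod.

Lemma sub_PhiStar (S S' : nat -> Prop) f :
  (forall k, S k -> S' k) -> PhiStar S f -> PhiStar S' f.
Proof. by move=> SS' [s [Ss ->]]; exists s; split=> // k /Ss /SS'. Qed.

Lemma divs_dvdn m n : (m %| n)%N -> forall k, divs m k -> divs n k.
Proof. by move=> mn k [k_gt0 km]; split=> //; apply: dvdn_trans mn. Qed.

Lemma PhiStar_Xn_sub1_pow n d L : (0 < d)%N -> (d %| n)%N ->
  PhiStar (divs n) (Xn_sub1_pow d L).
Proof.
move=> d_gt0 dn; elim: L => [|L [s [Ss Es]]].
  by exists [::]; rewrite big_nil.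
exists (divisors d ++ s); split.
  move=> k; rewrite mem_cat => /orP[|/Ss //].
  rewrite -dvdn_divisors // => kd; apply: (divs_dvdn dn).
  by split=> //; apply: dvdn_gt0 d_gt0 kd.
by rewrite big_cat -Es prod_Cyclotomic // /Xn_sub1_pow exprS.
Qed.

Lemma PhiStar_dvd_Xn_sub1_pow n f : (0 < n)%N -> PhiStar (divs n) f ->
  exists L h, Xn_sub1_pow n L = h * f.
Proof.
move=> n_gt0 [s [Ss ->]]; exists (size s).
elim: s Ss => [|k s IHs] Ss; first by exists 1; rewrite big_nil mulr1.
have [h Eh] := IHs (fun i si => Ss i (mem_behead (s := k :: s) si)).
have [g Eg] := Cyclotomic_dvd_Xn_sub1 n_gt0 (Ss k (mem_head k s)).2.
by exists (g * h); rewrite big_cons /Xn_sub1_pow exprS -/(Xn_sub1_pow _ _) Eh Eg; ring.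
Qed.

Section Families.
Variables (R : comNzRingType) (S : nat -> Prop).
Implicit Types x y : {poly int} -> {poly R}.

Lemma sub_compatible (S' : nat -> Prop) x :
  (forall k, S k -> S' k) -> compatible S' x -> compatible S x.
Proof.
by move=> SS' x_compat f g /(sub_PhiStar SS') Sf /(sub_PhiStar SS'); apply: x_compat.
Qed.

Lemma sub_lim_eq (S' : nat -> Prop) x y :
  (forall k, S k -> S' k) -> lim_eq S' x y -> lim_eq S x y.
Proof. by move=> SS' xy f /(sub_PhiStar SS') /xy. Qed.

Lemma compatibleB x y : compatible S x -> compatible S y -> compatible S (x \- y).
Proof.
move=> x_compat y_compat f g Sf Sg fg.
by apply: congr_modB; [apply: x_compat | apply: y_compat].
Qed.

Lemma lim_eq_sub0 x y : lim_eq S (x \- y) (fun=> 0) <-> lim_eq S x y.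
Proof. by split=> xy f Sf; apply/congr_mod_sub0; apply: xy. Qed.

End Families.

Definition vanishes_mod_Xn_sub1 (R : comNzRingType) (z : {poly int} -> {poly R}) d :=
  forall L, congr_mod (Xn_sub1_pow d L) (z (Xn_sub1_pow d L)) 0.

Definition padic_separated_divisors (R : comNzRingType) n :=
  forall p, prime p -> (p %| n)%N -> padic_separated R p.

Section Kernel.
Variables (R : comNzRingType) (n : nat) (z : {poly int} -> {poly R}).
Hypothesis z_compat : compatible (divs n) z.

Lemma vanishes_mod_Xn_sub1_mulp d p : prime p -> padic_separated R p ->
  (0 < d)%N -> (d * p %| n)%N ->
  vanishes_mod_Xn_sub1 z d -> vanishes_mod_Xn_sub1 z (d * p).
Proof.
move=> p_pr sepR d_gt0 dp_n zd N.
have p_gt0 := prime_gt0 p_pr.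
have dp_gt0 : (0 < d * p)%N by rewrite muln_gt0 d_gt0.
have d_n : (d %| n)%N by apply: dvdn_trans dp_n; apply: dvdn_mulr.
set F := Xn_sub1_pow (d * p) N.
rewrite /congr_mod subr0 polyR_Xn_sub1_pow.
apply: (padic_separated_monic_multiple sepR); first exact/monic_exp/monicXnsubC.
move=> j; set M := (p * N * j.+1)%N; set G := Xn_sub1_pow (d * p) M.
have [u [v Euv]] := subr1X_padic_mod ('X^d : {poly R}) N j.+1 p_pr.
have [a Ea] : congr_mod F (z G) (z F).
  have NM : (N <= M)%N by rewrite /M; nia.
  have [h Eh] := Xn_sub1_pow_dvd (d * p) 1 NM; rewrite muln1 in Eh.
  by apply: z_compat; try exact: PhiStar_Xn_sub1_pow; exists h.
have [b Eb] : congr_mod (Xn_sub1_pow d M) (z G) 0.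
  apply: congr_mod_trans (zd M); apply: z_compat; try exact: PhiStar_Xn_sub1_pow.
  exact: Xn_sub1_pow_dvd.
rewrite !polyR_Xn_sub1_pow subr0 in Ea Eb.
exists (b * u - a), (b * v * p%:R).
have -> : z F = z G - a * ('X^(d * p) - 1) ^+ N by rewrite -Ea; ring.
by rewrite Eb Euv exprM expnSr natrM; ring.
Qed.

Lemma vanishes_mod_Xn_sub1_dvdn : padic_separated_divisors R n ->
  vanishes_mod_Xn_sub1 z 1 ->
  forall d, (d %| n)%N -> (0 < d)%N -> vanishes_mod_Xn_sub1 z d.
Proof.
move=> sepR z1; elim/ltn_ind => d IHd d_n d_gt0.
have [d_gt1 | d_le1] := ltnP 1 d; last by have -> : d = 1%N by lia.
have p_dvd := pdiv_dvd d; have p_pr := pdiv_prime d_gt1.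
have Ed := divnK p_dvd.
have d'_n : (d %/ pdiv d %| n)%N.
  by apply: dvdn_trans d_n; rewrite -[X in (_ %| X)%N]Ed dvdn_mulr.
have d'_gt0 : (0 < d %/ pdiv d)%N by rewrite divn_gt0 ?pdiv_gt0 ?pdiv_leq // ltnW.
rewrite -Ed; apply: vanishes_mod_Xn_sub1_mulp; rewrite ?Ed //.
  exact/sepR/(dvdn_trans p_dvd).
by apply: IHd; rewrite // ltn_Pdiv ?prime_gt1.
Qed.

Lemma vanishes_mod_Xn_sub1_lim_eq0 : (0 < n)%N ->
  vanishes_mod_Xn_sub1 z n -> lim_eq (divs n) z (fun=> 0).
Proof.
move=> n_gt0 zn f Sf; have [L [h Eh]] := PhiStar_dvd_Xn_sub1_pow n_gt0 Sf.
have SE := PhiStar_Xn_sub1_pow L n_gt0 (dvdnn n).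
apply: congr_mod_trans (congr_mod_sym (z_compat Sf SE (ex_intro _ h Eh))) _.
exact: congr_mod_dvd Eh (zn L).
Qed.

End Kernel.

Lemma padic_separated_rho_injective (R : comNzRingType) m n :
  (0 < n)%N -> padic_separated_divisors R n -> rho_injective R m n.
Proof.
move=> n_gt0 sepR x y x_compat y_compat /(sub_lim_eq (divs_dvdn (dvd1n m))) xy1.
have z_compat := compatibleB x_compat y_compat.
have /lim_eq_sub0 z1 := xy1.
apply/lim_eq_sub0/vanishes_mod_Xn_sub1_lim_eq0 => //.
apply: (vanishes_mod_Xn_sub1_dvdn z_compat sepR) => // L.
by apply: z1; apply: PhiStar_Xn_sub1_pow.
Qed.

Lemma chain_padic_separated_divisors (R : comNzRingType) S a c :
  chain S (@equivR R) a c ->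
  padic_separated_divisors R a -> padic_separated_divisors R c.
Proof.
elim=> // {}a b {}c _ IHb _ bc /IHb sep_b l l_pr l_c.
case: bc => [Ebc | [[p [j [p_pr [sepR [Eb | Ec]]]]] | R0]].
- by rewrite -Ebc in l_c; apply: sep_b.
- by apply: sep_b; rewrite // Eb dvdn_mull.
- move: l_c; rewrite Ec Euclid_dvdM // Euclid_dvdX //.
  case/orP=> [/andP[l_p _] | /sep_b]; last exact.
  by move: l_p; rewrite dvdn_prime2 // => /eqP ->.
- by have /eqP := R0 1; rewrite oner_eq0.
Qed.

Lemma padic_separated_int p : (1 < p)%N -> padic_separated int p.
Proof.
move=> p_gt1 x x_div; have [y Ex] := x_div `|x|%N.
have [y0 | y_neq0] := eqVneq y 0; first by rewrite Ex y0 mulr0.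
have x_abs : (`|x| = p ^ `|x| * `|y|)%N by rewrite {1}Ex abszM natz.
have y_abs_gt0 : (0 < `|y|)%N by rewrite absz_gt0.
have := ltn_expl `|x|%N p_gt1; nia.
Qed.

Lemma partial_choice (A B : Type) (b0 : B) (P : A -> Prop) (Q : A -> B -> Prop) :
  (forall a, P a -> exists b, Q a b) -> exists F, forall a, P a -> Q a (F a).
Proof.
move=> PQ; exists (fun a => epsilon (inhabits b0) (Q a)) => a Pa.
by apply: epsilon_spec; apply: PQ.
Qed.

Section Intersection.
Variables (R : comNzRingType) (S : nat -> Prop).
Hypothesis S_gt0 : forall k, S k -> (0 < k)%N.
Hypothesis S1 : S 1%N.
Hypothesis S_directed :
  forall a b, S a -> S b -> exists c, [/\ S c, (a %| c)%N & (b %| c)%N].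
Hypothesis S_divs : forall n, S n -> forall k, divs n k -> S k.
Hypothesis S_rho_injective : forall n, S n -> rho_injective R 1 n.
Implicit Types x y : {poly int} -> {poly R}.

Lemma PhiStar_divs_bound f : PhiStar S f -> exists n, S n /\ PhiStar (divs n) f.
Proof.
case=> s [Ss ->]; suff [n Sn sn] : exists2 n, S n & forall k, k \in s -> divs n k.
  by exists n; split=> //; exists s.
elim: s Ss => [|k s IHs] Ss; first by exists 1%N.
have [n Sn sn] := IHs (fun i si => Ss i (mem_behead (s := k :: s) si)).
have Sk := Ss k (mem_head k s).
have [c [Sc kc nc]] := S_directed Sk Sn.
exists c => // i; rewrite in_cons => /orP[/eqP -> | si]; first by split; auto.
exact: divs_dvdn nc _ (sn i si).
Qed.

Lemma rho_injective_S x y : compatible S x -> compatible S y ->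
  lim_eq (divs 1) x y -> lim_eq S x y.
Proof.
move=> x_compat y_compat xy1 f /PhiStar_divs_bound[n [Sn Sf]].
by apply: (S_rho_injective Sn) => //; apply: sub_compatible (S_divs Sn) _.
Qed.

Section Glue.
Variables (y : {poly int} -> {poly R}) (Z : nat -> {poly int} -> {poly R}).
Variable level : {poly int} -> nat.
Hypothesis Z_compat : forall n, S n -> compatible (divs n) (Z n).
Hypothesis Z_y : forall n, S n -> lim_eq (divs 1) (Z n) y.
Hypothesis level_S : forall f, PhiStar S f -> S (level f).
Hypothesis level_divs : forall f, PhiStar S f -> PhiStar (divs (level f)) f.

Lemma Z_agree n n' f : S n -> S n' ->
  PhiStar (divs n) f -> PhiStar (divs n') f -> congr_mod f (Z n f) (Z n' f).
Proof.
move=> Sn Sn' fn fn'; have [c [Sc nc n'c]] := S_directed Sn Sn'.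
suff Zc k : S k -> (k %| c)%N -> lim_eq (divs k) (Z k) (Z c).
  exact: congr_mod_trans (Zc n Sn nc f fn) (congr_mod_sym (Zc n' Sn' n'c f fn')).
move=> Sk kc; apply: (S_rho_injective Sk); first exact: Z_compat.
  exact: sub_compatible (divs_dvdn kc) (Z_compat Sc).
by move=> f1 f1_1; apply: congr_mod_trans (Z_y Sk f1_1) (congr_mod_sym (Z_y Sc f1_1)).
Qed.

Lemma glued_compatible : compatible S (fun f => Z (level f) f).
Proof.
move=> f g Sf Sg [h Eg].
have [c [Sc fc gc]] := S_directed (level_S Sf) (level_S Sg).
have cf : PhiStar (divs c) f := sub_PhiStar (divs_dvdn fc) (level_divs Sf).
have cg : PhiStar (divs c) g := sub_PhiStar (divs_dvdn gc) (level_divs Sg).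
apply: congr_mod_trans (congr_mod_dvd Eg (Z_agree (level_S Sg) Sc (level_divs Sg) cg)) _.
apply: congr_mod_trans (Z_compat Sc cf cg (ex_intro _ h Eg)) _.
exact: Z_agree Sc (level_S Sf) cf (level_divs Sf).
Qed.

Lemma glued_lim_eq : lim_eq (divs 1) (fun f => Z (level f) f) y.
Proof.
move=> f f1; have Sf : PhiStar S f by apply: sub_PhiStar (S_divs S1) f1.
exact: Z_y (level_S Sf) f (sub_PhiStar (divs_dvdn (dvd1n _)) f1).
Qed.

End Glue.

Lemma identified_with_intersection_of : identified_with_intersection R S.
Proof.
split=> [|y y_compat]; first exact: rho_injective_S.
split=> [[x [x_compat xy]] n Sn | Zy].
  by exists x; split=> //; apply: sub_compatible (S_divs Sn) x_compat.
have [Z HZ] := partial_choice (fun=> 0) Zy.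
have [level Hlevel] := partial_choice 0%N PhiStar_divs_bound.
have Z_compat n : S n -> compatible (divs n) (Z n) by case/HZ.
have Z_y n : S n -> lim_eq (divs 1) (Z n) y by case/HZ.
have level_S f : PhiStar S f -> S (level f) by case/Hlevel.
have level_divs f : PhiStar S f -> PhiStar (divs (level f)) f by case/Hlevel.
exists (fun f => Z (level f) f).
by split; [apply: (glued_compatible (y := y)) | apply: glued_lim_eq].
Qed.

End Intersection.

Theorem corollary4p3 :
  (forall (R : comNzRingType) (S : nat -> Prop), admissible R S ->
     (forall m n : nat, S m -> S n -> (m %| n)%N -> rho_injective R m n)
     /\ identified_with_intersection R S)
  /\
  ((forall m n : nat, (0 < m)%N -> (0 < n)%N -> (m %| n)%N -> rho_injective int m n)
   /\ identified_with_intersection int Nat_pos).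
Proof.
split.
  move=> R S [S_gt0 [[k Sk] [S_chain [S_directed S_divs]]]].
  have S1 : S 1%N by apply: (S_divs _ Sk); split; rewrite ?dvd1n.
  have rhoS m n : S n -> rho_injective R m n.
    move=> Sn; apply: padic_separated_rho_injective (S_gt0 _ Sn) _.
    apply: chain_padic_separated_divisors (S_chain _ _ S1 Sn) _ => p /prime_gt1.
    by rewrite dvdn1 => + /eqP p1; rewrite p1.
  split=> [m n _ Sn _ | ]; first exact: rhoS.
  by apply: identified_with_intersection_of => // n Sn; apply: rhoS.
have rhoZ m n : (0 < n)%N -> rho_injective int m n.
  move=> n_gt0; apply: padic_separated_rho_injective n_gt0 _ => p p_pr _.
  exact/padic_separated_int/prime_gt1.
split=> [m n _ n_gt0 _ | ]; first exact: rhoZ.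
apply: identified_with_intersection_of => // [a b a_gt0 b_gt0 | n _ k [] // | n].
  by exists (a * b)%N; rewrite /Nat_pos muln_gt0 a_gt0 dvdn_mulr ?dvdn_mull.
exact: rhoZ.
Qed.
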